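(* The matrix $$U_5=\tfrac12 S_0\otimes\left(I_2\otimes I_2+\sigma_1\otimes\sigma_1+\sigma_2\otimes\sigma_2+\sigma_3\otimes\sigma_3\right)+S_3\otimes I_2\otimes\sigma_1$$ on $\mathbb{C}^2\otimes\mathbb{C}^2\otimes\mathbb{C}^2$ is unitary and $\mathrm{sr}(U_5)=5$.
   Context: $S_0=\begin{bmatrix}1&0\\0&0\end{bmatrix}$, $S_1=\begin{bmatrix}0&1\\0&0\end{bmatrix}$, $S_2=\begin{bmatrix}0&0\\1&0\end{bmatrix}$, $S_3=\begin{bmatrix}0&0\\0&1\end{bmatrix}$. $I_2$ is the $2\times2$ identity and $\sigma_1=\begin{bmatrix}0&1\\1&0\end{bmatrix}$, $\sigma_2=\begin{bmatrix}0&-i\\i&0\end{bmatrix}$, $\sigma_3=\begin{bmatrix}1&0\\0&-1\end{bmatrix}$ are the Pauli matrices. For a matrix $U$ on $\mathbb{C}^2\otimes\mathbb{C}^2\otimes\mathbb{C}^2$ (systems $A,B,C$), its Schmidt rank $\mathrm{sr}(U)$ is the least integer $r$ such that $U=\sum_{j=1}^r A_j\otimes B_j\otimes C_j$ with $A_j,B_j,C_j$ complex $2\times 2$ matrices (i.e. the tensor rank of $U$). *)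

From HB Require Import structures.
From mathcomp Require Import all_boot all_order all_algebra.
From mathcomp Require Import reals.
From mathcomp.real_closed Require Import complex mxtens.
Set Implicit Arguments. Unset Strict Implicit. Unset Printing Implicit Defensive.
Import Order.TTheory GRing.Theory Num.Theory.
Local Open Scope ring_scope.

Section Defs.
Variable R : realType.
Local Notation C := (R[i]).

Definition S0 : 'M[C]_2 := \matrix_(i < 2, j < 2) ((i == 0 :> nat) && (j == 0 :> nat))%:R.
Definition S1 : 'M[C]_2 := \matrix_(i < 2, j < 2) ((i == 0 :> nat) && (j == 1 :> nat))%:R.
Definition S2 : 'M[C]_2 := \matrix_(i < 2, j < 2) ((i == 1 :> nat) && (j == 0 :> nat))%:R.
Definition S3 : 'M[C]_2 := \matrix_(i < 2, j < 2) ((i == 1 :> nat) && (j == 1 :> nat))%:R.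
Definition I2 : 'M[C]_2 := 1%:M.
Definition sigma1 : 'M[C]_2 := S1 + S2.
Definition sigma2 : 'M[C]_2 := (- 'i) *: S1 + 'i *: S2.
Definition sigma3 : 'M[C]_2 := S0 - S3.

Definition tens3 (A B D : 'M[C]_2) : 'M[C]_(2 * 2 * 2) := (A *t B) *t D.

Definition adjmx n (U : 'M[C]_n) : 'M[C]_n := map_mx Num.conj U^T.
Definition unitary n (U : 'M[C]_n) : Prop :=
  U *m adjmx U = 1%:M /\ adjmx U *m U = 1%:M.

Definition has_tens_decomp (U : 'M[C]_(2 * 2 * 2)) (r : nat) : Prop :=
  exists (A B D : 'I_r -> 'M[C]_2), U = \sum_(j < r) tens3 (A j) (B j) (D j).

Definition schmidt_rank_eq (U : 'M[C]_(2 * 2 * 2)) (r : nat) : Prop :=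
  has_tens_decomp U r /\ forall r', (r' < r)%N -> ~ has_tens_decomp U r'.

Definition U5 : 'M[C]_(2 * 2 * 2) :=
  2^-1 *: tens3 S0 I2 I2 + 2^-1 *: tens3 S0 sigma1 sigma1
  + 2^-1 *: tens3 S0 sigma2 sigma2 + 2^-1 *: tens3 S0 sigma3 sigma3
  + tens3 S3 I2 sigma1.
End Defs.

From HB Require Import structures.
From mathcomp Require Import all_boot all_order all_algebra.
From mathcomp Require Import reals ring.
From mathcomp.real_closed Require Import complex mxtens.
Set Implicit Arguments. Unset Strict Implicit. Unset Printing Implicit Defensive.
Import Order.TTheory GRing.Theory Num.Theory.
Local Open Scope ring_scope.

(* Writing the basis of C^2 (x) C^2 (x) C^2 as |a b c>, the Pauli sum
   I(x)I + s1(x)s1 + s2(x)s2 + s3(x)s3 is twice the swap of the two factors, so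
   U5 is the permutation matrix of the involution
     |0 b c> -> |0 c b>,   |1 b c> -> |1 b (1-c)>.
   The permutation matrix of an involution is real symmetric and squares to
   the identity, hence is unitary; writing the swap in matrix units as
   S0(x)S0 + S1(x)S2 + S2(x)S1 + S3(x)S3 gives five product terms, so
   sr(U5) <= 5.
   For the lower bound, fix the first system to a diagonal entry a and reshape
   the 4x4 block U(a.., a..) into the "slice" M_a with rows (b,b') and columns
   (c,c').  A decomposition U = sum_(j<4) A_j(x)B_j(x)D_j yields
   M_a = X diag(A_j a a) Y for matrices X, Y independent of a.  Here M_0 is an
   involution and M_1 M_0 M_1 = 0 with M_1 <> 0, which is impossible for two
   matrices simultaneously "diagonalised" this way (involution_sandwich).
   Shorter decompositions are padded with zero terms. *)

Lemma diag_mx_sqr0 (F : fieldType) n (d : 'rV[F]_n) :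
  diag_mx d *m diag_mx d = 0 -> diag_mx d = 0.
Proof.
rewrite mulmx_diag => dd0; apply/matrixP => i j; rewrite !mxE.
have /eqP : (diag_mx (\row_k (d 0 k * d 0 k))) i i = 0 by rewrite dd0 mxE.
by rewrite !mxE eqxx mulr1n mulf_eq0 orbb => /eqP->; rewrite mul0rn.
Qed.

(* If P = X diag(a) Y is an involution and Q = X diag(b) Y satisfies
   Q P Q = 0, then Q = 0: X and Y are invertible, E = Y P X is inverse to
   diag(a), and the equation reduces to diag(b) E diag(b) = 0, whence
   diag(b)^2 = diag(a) diag(b) E diag(b) = 0 since diagonal matrices commute. *)
Lemma involution_sandwich (F : fieldType) n (X Y P Q : 'M[F]_n) (a b : 'rV[F]_n) :
  P = X *m diag_mx a *m Y -> Q = X *m diag_mx b *m Y ->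
  P *m P = 1%:M -> Q *m P *m Q = 0 -> Q = 0.
Proof.
move=> hP hQ PP QPQ.
set Da := diag_mx a; set Db := diag_mx b; set E := Y *m P *m X.
have XinvL : (Da *m Y *m P) *m X = 1%:M.
  by apply: mulmx1C; rewrite !mulmxA -hP PP.
have YinvR : Y *m (P *m X *m Da) = 1%:M.
  by apply: mulmx1C; rewrite -!mulmxA [X *m _]mulmxA -hP PP.
have DaE : Da *m E = 1%:M by rewrite /E !mulmxA.
have DbEDb : Db *m E *m Db = 0.
  transitivity ((Da *m Y *m P) *m (Q *m P *m Q) *m (P *m X *m Da)).
    by rewrite -[LHS]mul1mx -[LHS]mulmx1 -{1}XinvL -YinvR hQ /E !mulmxA.
  by rewrite QPQ mulmx0 mul0mx.
have Db0 : Db = 0.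
  apply: diag_mx_sqr0; rewrite -[Db in Db *m _]mulmx1 -DaE mulmxA -diag_mxC.
  by rewrite -(mulmxA Da) -mulmxA DbEDb mulmx0.
by rewrite hQ -/Db Db0 mulmx0 mul0mx.
Qed.

Section Rank5.
Variable R : realType.
Local Notation C := R[i].

Lemma tens_decompS (U : 'M[C]_(2 * 2 * 2)) r :
  has_tens_decomp U r -> has_tens_decomp U r.+1.
Proof.
case=> A [B [D ->]].
pose ext (S : 'I_r -> 'M[C]_2) (j : 'I_r.+1) := oapp S 0 (unlift ord_max j).
exists (ext A), (ext B), (ext D).
rewrite big_ord_recr /ext unlift_none /= /tens3 !tens0mx addr0.
apply: eq_bigr => j _.
have -> : widen_ord (leqnSn r) j = lift ord_max j.
  by apply: val_inj; rewrite /= /bump leqNgt ltn_ord add0n.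
by rewrite liftK.
Qed.

Lemma tens_decomp_monotone (U : 'M[C]_(2 * 2 * 2)) r r' :
  (r <= r')%N -> has_tens_decomp U r -> has_tens_decomp U r'.
Proof.
move=> /subnK <-; elim: (r' - r)%N => [//|k IHk] dec.
by rewrite addSn; apply: tens_decompS; apply: IHk.
Qed.

Definition idx3 (a b c : 'I_2) : 'I_(2 * 2 * 2) :=
  mxtens_index (mxtens_index (a, b), c).

Lemma idx3P (P : 'I_(2 * 2 * 2) -> Prop) :
  (forall a b c, P (idx3 a b c)) -> forall i, P i.
Proof.
move=> Pabc i; case: (mxtens_indexP i) => ab c.
by case: (mxtens_indexP ab) => a b; apply: Pabc.
Qed.

Lemma mxtens_index_eq m n (a a' : 'I_m) (b b' : 'I_n) :
  (mxtens_index (a, b) == mxtens_index (a', b')) = (a == a') && (b == b').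
Proof. by rewrite (inj_eq (can_inj (@mxtens_indexK _ _))) xpair_eqE. Qed.

Lemma idx3_eq a b c a' b' c' :
  (idx3 a b c == idx3 a' b' c') = [&& a == a', b == b' & c == c'].
Proof. by rewrite /idx3 !mxtens_index_eq andbA. Qed.

Lemma sum_mxtens m n (F : 'I_(m * n) -> C) :
  \sum_k F k = \sum_i \sum_j F (mxtens_index (i, j)).
Proof.
rewrite pair_big /= (reindex (@mxtens_index m n)) /=; last first.
  by exists (@mxtens_unindex m n) => x _; [apply: mxtens_indexK | apply: mxtens_unindexK].
by apply: eq_bigr => -[i j].
Qed.

Lemma sum_idx3 (F : 'I_(2 * 2 * 2) -> C) :
  \sum_k F k = \sum_a \sum_b \sum_c F (idx3 a b c).
Proof. by rewrite !sum_mxtens. Qed.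

Lemma tens3E (A B D : 'M[C]_2) a b c a' b' c' :
  tens3 A B D (idx3 a b c) (idx3 a' b' c') = A a a' * B b b' * D c c'.
Proof. by rewrite /tens3 /idx3 !tensmxE. Qed.

Lemma U5_entry a b c a' b' c' :
  U5 R (idx3 a b c) (idx3 a' b' c') =
    S0 R a a' * (2^-1 * (I2 R b b' * I2 R c c' + sigma1 R b b' * sigma1 R c c'
                       + sigma2 R b b' * sigma2 R c c' + sigma3 R b b' * sigma3 R c c'))
    + S3 R a a' * (I2 R b b' * sigma1 R c c').
Proof.
(* Generalising the blocks keeps mxE from expanding their entries. *)
rewrite /U5; move: (S0 R) (S3 R) (I2 R) (sigma1 R) (sigma2 R) (sigma3 R).
by move=> s0 s3 i2 p1 p2 p3; rewrite !mxE /idx3 !mxtens_indexK /=; ring.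
Qed.

Ltac case_I2 x := case: x => [[|[|//]] ?].

Lemma sigma2_sqrE b b' c c' :
  sigma2 R b b' * sigma2 R c c' =
  - ((((b == 1 :> nat) && (b' == 0 :> nat))%:R - ((b == 0 :> nat) && (b' == 1 :> nat))%:R)
    * (((c == 1 :> nat) && (c' == 0 :> nat))%:R - ((c == 0 :> nat) && (c' == 1 :> nat))%:R)).
Proof.
have ii : 'i * 'i = -1 :> C by rewrite -expr2 sqrCi.
by rewrite !mxE -[in RHS]mulN1r -ii; ring.
Qed.

Lemma pauli_swap (b c b' c' : 'I_2) :
  I2 R b b' * I2 R c c' + sigma1 R b b' * sigma1 R c c'
  + sigma2 R b b' * sigma2 R c c' + sigma3 R b b' * sigma3 R c c'
  = 2 * ((b == c') && (c == b'))%:R.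
Proof.
rewrite sigma2_sqrE !mxE.
by case_I2 b; case_I2 b'; case_I2 c; case_I2 c'; rewrite /=; ring.
Qed.

(* U5 is the permutation matrix of the involution
   |0 b c> <-> |0 c b>,  |1 b c> <-> |1 b (1-c)>. *)
Definition u5rel (a b c a' b' c' : 'I_2) : bool :=
  (a == a') && if a == ord0 then (b == c') && (c == b') else (b == b') && (c != c').

Lemma U5E a b c a' b' c' :
  U5 R (idx3 a b c) (idx3 a' b' c') = (u5rel a b c a' b' c')%:R.
Proof.
rewrite U5_entry pauli_swap mulKf ?pnatr_eq0 // !mxE.
rewrite -!(natrM, natrD); congr (_%:R).
by case_I2 a; case_I2 b; case_I2 c; case_I2 a'; case_I2 b'; case_I2 c'.
Qed.

Local Notation unpair := (@mxtens_unindex 2 2).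

Definition slice (U : 'M[C]_(2 * 2 * 2)) (a : 'I_2) : 'M[C]_(2 * 2) :=
  \matrix_(k, l) U (idx3 a (unpair k).1 (unpair l).1) (idx3 a (unpair k).2 (unpair l).2).

Lemma sliceE U a b b' c c' :
  slice U a (mxtens_index (b, b')) (mxtens_index (c, c')) = U (idx3 a b c) (idx3 a b' c').
Proof. by rewrite mxE !mxtens_indexK. Qed.

Definition vec_cols r (B : 'I_r -> 'M[C]_2) : 'M[C]_(2 * 2, r) :=
  \matrix_(k, j) B j (unpair k).1 (unpair k).2.

Lemma slice_tens_decomp r (A B D : 'I_r -> 'M[C]_2) a :
  slice (\sum_(j < r) tens3 (A j) (B j) (D j)) a =
  vec_cols B *m diag_mx (\row_j A j a a) *m (vec_cols D)^T.
Proof.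
rewrite mul_mx_diag; apply/matrixP => k l; rewrite [LHS]mxE summxE [RHS]mxE.
by apply: eq_bigr => j _; rewrite tens3E !mxE [A j a a * _]mulrC.
Qed.

Lemma mulmx4E (X Y : 'M[C]_(2 * 2)) i j :
  (X *m Y) i j = \sum_b \sum_b' X i (mxtens_index (b, b')) * Y (mxtens_index (b, b')) j.
Proof. by rewrite mxE sum_mxtens. Qed.

Section PermutationMatrix.
Variable M : 'M[C]_(2 * 2 * 2).
Hypothesis M_entries :
  forall a b c a' b' c', M (idx3 a b c) (idx3 a' b' c') = (u5rel a b c a' b' c')%:R.

(* u5rel is symmetric: M is real symmetric, hence self-adjoint. *)
Lemma adjM : adjmx M = M.
Proof.
apply/matrixP => i j; elim/idx3P: i => a b c; elim/idx3P: j => a' b' c'.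
rewrite /adjmx !mxE !M_entries conjC_nat; congr (_%:R).
by case_I2 a; case_I2 b; case_I2 c; case_I2 a'; case_I2 b'; case_I2 c'.
Qed.

(* u5rel is the graph of an involution: M is its own inverse. *)
Lemma M_involutive : M *m M = 1%:M.
Proof.
apply/matrixP => i j; elim/idx3P: i => a b c; elim/idx3P: j => a' b' c'.
rewrite !mxE sum_idx3 !big_ord_recl !big_ord0 !M_entries !addr0.
rewrite -!(natrM, natrD) idx3_eq; congr (_%:R).
by case_I2 a; case_I2 b; case_I2 c; case_I2 a'; case_I2 b'; case_I2 c'.
Qed.

Lemma M_unitary : unitary M.
Proof. by rewrite /unitary adjM M_involutive. Qed.

(* The swap is S0(x)S0 + S1(x)S2 + S2(x)S1 + S3(x)S3, which gives five terms. *)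
Lemma M_decomp5 : has_tens_decomp M 5.
Proof.
exists (fun j => nth 0 [:: S0 R; S0 R; S0 R; S0 R; S3 R] j),
       (fun j => nth 0 [:: S0 R; S1 R; S2 R; S3 R; I2 R] j),
       (fun j => nth 0 [:: S0 R; S2 R; S1 R; S3 R; sigma1 R] j).
apply/matrixP => i j; elim/idx3P: i => a b c; elim/idx3P: j => a' b' c'.
rewrite M_entries summxE !big_ord_recl big_ord0 !tens3E /= /sigma1 !mxE addr0.
rewrite -!(natrM, natrD); congr (_%:R).
by case_I2 a; case_I2 b; case_I2 c; case_I2 a'; case_I2 b'; case_I2 c'.
Qed.

Lemma sliceM a b b' c c' :
  slice M a (mxtens_index (b, b')) (mxtens_index (c, c')) = (u5rel a b c a b' c')%:R.
Proof. by rewrite sliceE M_entries. Qed.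

Definition one2 : 'I_2 := lift ord0 ord0.

(* The slice at 0 is the swap (b, b') -> (b', b), an involution. *)
Lemma slice0_involutive : slice M ord0 *m slice M ord0 = 1%:M.
Proof.
apply/matrixP => i j; case: (mxtens_indexP i) => b b'; case: (mxtens_indexP j) => c c'.
rewrite mulmx4E !big_ord_recl !big_ord0 !sliceM [RHS]mxE mxtens_index_eq.
rewrite !addr0 -!(natrM, natrD); congr (_%:R).
by case_I2 b; case_I2 b'; case_I2 c; case_I2 c'.
Qed.

(* The slice at 1 is vec(I) vec(sigma1)^T, and vec(sigma1)^T swap vec(I) = tr sigma1 = 0. *)
Lemma slice1_sandwich : slice M one2 *m slice M ord0 *m slice M one2 = 0.
Proof.
apply/matrixP => i j; case: (mxtens_indexP i) => b b'; case: (mxtens_indexP j) => c c'.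
rewrite !mulmx4E !big_ord_recl !big_ord0 !mulmx4E !big_ord_recl !big_ord0 !sliceM [RHS]mxE.
rewrite !addr0 -!(natrM, natrD); apply/eqP; rewrite pnatr_eq0; apply/eqP.
by case_I2 b; case_I2 b'; case_I2 c; case_I2 c'.
Qed.

Lemma slice1_neq0 : slice M one2 != 0.
Proof.
apply/eqP => /matrixP /(_ (mxtens_index (ord0, ord0)) (mxtens_index (ord0, one2))) /eqP.
by rewrite sliceM mxE oner_eq0.
Qed.

Lemma M_no_decomp4 : ~ has_tens_decomp M 4.
Proof.
move=> [A [B [D decM]]]; apply: (negP slice1_neq0); apply/eqP.
have := slice_tens_decomp A B D; rewrite -decM => sliceM_decomp.
exact: involution_sandwich (sliceM_decomp ord0) (sliceM_decomp one2)
                           slice0_involutive slice1_sandwich.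
Qed.
End PermutationMatrix.
End Rank5.

Theorem mainTheorem4 (R : realType) :
  unitary (U5 R) /\ schmidt_rank_eq (U5 R) 5.
Proof.
have U5_entries := @U5E R.
split; first exact: M_unitary.
split; first exact: M_decomp5.
move=> r lt_r5 decU5; apply: (M_no_decomp4 U5_entries).
by apply: (tens_decomp_monotone _ decU5); rewrite -ltnS.
Qed.
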